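(* Assume Case 4 holds and let $\mathcal{I}_f^{AR}=[l_1,l_1+l_2]$. Then for every $n\ge1$, $Q^n$ contains the term $z^{\gamma_n}w^{d^n}$, $(\gamma_n,d^n)$ is a vertex of $N(Q^n)$, and for every $l\in\mathcal{I}_f^{AR}$, $$w_l(Q^n)=w_l(z^{\gamma_n}w^{d^n})=\gamma_n+l\,d^n.$$
   Context: Let $f(z,w)=(p(z),q(z,w))$ be a holomorphic skew product germ at the origin of $\mathbb{C}^2$ with $f(0,0)=(0,0)$, where $p(z)=a_\delta z^\delta+O(z^{\delta+1})$ with $a_\delta\neq0$ and integer $\delta\ge1$, and $q(z,w)=\sum_{i+j\ge1}b_{ij}z^iw^j$ is not identically zero. For $n\ge1$ write $f^n=(p^n,Q^n)$. For a nonzero germ $g=\sum g_{ij}z^iw^j$, say $g$ contains $z^aw^b$ if $g_{ab}\neq0$, and for real $l>0$ let $w_l(g)=\min\{i+lj: g_{ij}\neq0\}$. The Newton polygon $N(g)$ is the convex hull of $\bigcup_{g_{ij}\neq0}\{(x,y):x\ge i,\ y\ge j\}$. Let $(n_1,m_1),\dots,(n_s,m_s)$ be the vertices of $N(q)$ with $n_1<\cdots<n_s$, $m_1>\cdots>m_s$; for $1\le k\le s-1$ let $T_k$ be the $y$-intercept of the line through $(n_k,m_k)$ and $(n_{k+1},m_{k+1})$. Case 4 means: $s>2$ and $T_k\le\delta\le T_{k-1}$ for some $2\le k\le s-1$; for this $k$ set $(\gamma,d)=(n_k,m_k)$, $l_1=\frac{n_k-n_{k-1}}{m_{k-1}-m_k}$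 and $l_2$ defined by $l_1+l_2=\frac{n_{k+1}-n_k}{m_k-m_{k+1}}$. Define $\gamma_n=\gamma(\delta^{n-1}+\delta^{n-2}d+\cdots+d^{n-1})$. *)

From HB Require Import structures.
From mathcomp Require Import all_boot all_order all_algebra.
From mathcomp Require Import reals complex.
Set Implicit Arguments.
Unset Strict Implicit.
Unset Printing Implicit Defensive.
Import Order.TTheory GRing.Theory Num.Theory.
Local Open Scope ring_scope.

Section Series.
Variable R : realType.
Local Notation C := R[i].

(* a germ g = sum_{i,j} g i j z^i w^j *)
Definition series := nat -> nat -> C.

(* holomorphic germ at the origin = convergent power series *)
Definition convergent (g : series) : Prop :=
  exists r : R, 0 < r /\ exists M : R,
    forall i j, Normc.normc (g i j) * r ^+ (i + j) <= M.

Definition convergent1 (p : nat -> C) : Prop :=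
  exists r : R, 0 < r /\ exists M : R,
    forall i, Normc.normc (p i) * r ^+ i <= M.

Definition sone : series := fun i j => ((i == 0%N) && (j == 0%N))%:R.
Definition sZ : series := fun i j => ((i == 1%N) && (j == 0%N))%:R.
Definition sW : series := fun i j => ((i == 0%N) && (j == 1%N))%:R.

Definition monomial (a b : nat) : series :=
  fun i j => ((i == a) && (j == b))%:R.

Definition smul (f g : series) : series :=
  fun a b => \sum_(i < a.+1) \sum_(j < b.+1) f i j * g (a - i)%N (b - j)%N.

Fixpoint spow (f : series) (n : nat) : series :=
  if n is n'.+1 then smul f (spow f n') else sone.

(* composition g(P(z,w), Q(z,w)), for P, Q without constant term
   (only the terms with i + j <= a + b can contribute to z^a w^b) *)
Definition scomp (g P Q : series) : series :=
  fun a b => \sum_(i < (a + b).+1) \sum_(j < (a + b).+1)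
               g i j * smul (spow P i) (spow Q j) a b.

Definition lift1 (p : nat -> C) : series :=
  fun i j => if j == 0%N then p i else 0.

(* f^n = (p^n, Q^n) for the skew product f(z,w) = (p(z), q(z,w)):
   f^0 = id, f^(n+1) = f o f^n *)
Fixpoint skew_iter (p : nat -> C) (q : series) (n : nat) : series * series :=
  if n is n'.+1 then
    let PQ := skew_iter p q n' in
    (scomp (lift1 p) PQ.1 PQ.2, scomp q PQ.1 PQ.2)
  else (sZ, sW).

Definition contains (g : series) (a b : nat) : Prop := g a b != 0.

Definition wl_eq (g : series) (l v : R) : Prop :=
  (exists i j, g i j != 0 /\ i%:R + l * j%:R = v) /\
  (forall i j, g i j != 0 -> v <= i%:R + l * j%:R).

(* Newton polygon: convex hull of the union of the quadrants
   {x >= i, y >= j} over the support of g *)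
Definition in_quadrants (g : series) (x : R * R) : Prop :=
  exists i j, g i j != 0 /\ i%:R <= x.1 /\ j%:R <= x.2.

Definition newton_polygon (g : series) (x : R * R) : Prop :=
  exists (n : nat) (pts : 'I_n -> R * R) (lam : 'I_n -> R),
    (forall k, in_quadrants g (pts k)) /\ (forall k, 0 <= lam k) /\
    \sum_(k < n) lam k = 1 /\
    x = (\sum_(k < n) lam k * (pts k).1, \sum_(k < n) lam k * (pts k).2).

Definition is_vertex (g : series) (v : R * R) : Prop :=
  newton_polygon g v /\
  forall a b : R * R, forall t : R,
    newton_polygon g a -> newton_polygon g b -> 0 < t < 1 ->
    v = (t * a.1 + (1 - t) * b.1, t * a.2 + (1 - t) * b.2) ->
    a = v /\ b = v.

Definition y_intercept (x1 y1 x2 y2 : R) : R :=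
  y1 - x1 * (y2 - y1) / (x2 - x1).

End Series.

(* Write weight L a b = a + L b for the L-weight of z^a w^b, and say that
   (x,y) lies above (a,b) when its L1- and its L2-weights both dominate those
   of (a,b); here L1 = l1 and L2 = l1 + l2 are the slopes of the two edges of
   N(q) at the vertex (gamma, d).  The proof is an induction on n with the
   invariant
     P^n is supported above (delta^n, 0) and Q^n above (gamma_n, d^n),
     and both corner coefficients are nonzero,
   from which the theorem follows at once: a support point lying below the
   whole support for two distinct weights is a vertex of the Newton polygon
   and minimizes every intermediate weight. *)

From HB Require Import structures.
From mathcomp Require Import all_boot all_order all_algebra.
From mathcomp Require Import reals complex.
From mathcomp Require Import ring lra zify.
Import Order.TTheory GRing.Theory Num.Theory.
Local Open Scope ring_scope.
Set Implicit Arguments.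
Unset Strict Implicit.

Lemma sum_ord_neq0 (V : zmodType) m (F : 'I_m -> V) :
  \sum_(i < m) F i != 0 -> exists i, F i != 0.
Proof.
have [/existsP [i Fi] _|none] := boolP [exists i, F i != 0]; first by exists i.
rewrite big1 ?eqxx // => i _; apply/eqP.
by move/existsPn: none => /(_ i); rewrite negbK.
Qed.

Lemma sum_ord_single (V : zmodType) m (F : 'I_m -> V) (i0 : 'I_m) :
  (forall i, i != i0 -> F i = 0) -> \sum_(i < m) F i = F i0.
Proof. by move=> F0; rewrite (bigD1 i0) //= big1 ?addr0 // => i /andP [_ /F0]. Qed.

Lemma chain_rel (T : Type) (r : T -> T -> Prop) (f : nat -> T) a b :
  (forall x y z, r x y -> r y z -> r x z) ->
  (forall i, (a <= i < b)%N -> r (f i) (f i.+1)) -> (a < b)%N -> r (f a) (f b).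
Proof.
move=> r_trans; elim: b => // b IH step.
rewrite ltnS leq_eqVlt => /orP [/eqP eq_ab|lt_ab]; first by rewrite -eq_ab; apply: step; lia.
apply: r_trans (IH _ lt_ab) (step b _); last lia.
by move=> i ?; apply: step; lia.
Qed.

Section Cones.
Variable R : realType.
Implicit Types (L : R) (f g P Q : series R).

Definition weight L (a b : nat) : R := a%:R + L * b%:R.

Lemma weightD L a b c e : weight L (a + c) (b + e) = weight L a b + weight L c e.
Proof. by rewrite /weight !natrD; ring. Qed.

Lemma weight_ge0 L a b : 0 <= L -> 0 <= weight L a b.
Proof. by move=> L0; rewrite /weight addr_ge0 ?mulr_ge0. Qed.

Lemma weight_scale L (D G E i j : nat) : (0 < D)%N ->
  weight L (i * D + j * G) (j * E) = D%:R * weight ((G%:R + L * E%:R) / D%:R) i j.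
Proof.
move=> D_gt0; have D_neq0 : D%:R != 0 :> R by rewrite pnatr_eq0 -lt0n.
by rewrite /weight !natrD !natrM; field.
Qed.

Lemma two_lines_meet L L' (u1 u2 v1 v2 : R) : L != L' ->
  u1 + L * u2 = v1 + L * v2 -> u1 + L' * u2 = v1 + L' * v2 -> u1 = v1 /\ u2 = v2.
Proof.
move=> neL e e'.
have : (L - L') * (u2 - v2) = 0.
  transitivity ((u1 + L * u2 - (v1 + L * v2)) - (u1 + L' * u2 - (v1 + L' * v2))).
    by ring.
  by rewrite e e' !subrr.
move/eqP; rewrite mulf_eq0 subr_eq0 (negbTE neL) subr_eq0 => /eqP e2.
by split => //; move: e; rewrite e2 => /addIr.
Qed.

Section TwoWeights.
Variables L1 L2 : R.

Definition above (x y a b : nat) : Prop :=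
  weight L1 a b <= weight L1 x y /\ weight L2 a b <= weight L2 x y.

Definition supported_above f (a b : nat) : Prop :=
  forall x y, f x y != 0 -> above x y a b.

Lemma above_refl a b : above a b a b.
Proof. by split. Qed.

Lemma above_trans x y a b c e : above x y a b -> above a b c e -> above x y c e.
Proof. by move=> [h1 h2] [h3 h4]; split; [apply: le_trans h3 h1|apply: le_trans h4 h2]. Qed.

Lemma above_add x1 y1 a1 b1 x2 y2 a2 b2 :
  above x1 y1 a1 b1 -> above x2 y2 a2 b2 ->
  above (x1 + x2) (y1 + y2) (a1 + a2) (b1 + b2).
Proof. by move=> [h1 h2] [h3 h4]; rewrite /above !weightD; split; apply: lerD. Qed.

Lemma above_horizontal a x : (a <= x)%N -> above x 0 a 0.
Proof. by move=> le_ax; rewrite /above /weight !mulr0 !addr0 ler_nat le_ax. Qed.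

Lemma weight_between l x y a b :
  L1 <= l <= L2 -> above x y a b -> weight l a b <= weight l x y.
Proof.
move=> /andP [le1 le2] []; rewrite /weight => w1 w2.
case: (leP (b%:R : R) y%:R) => [le_by|lt_yb].
  have : L1 * (y%:R - b%:R) <= l * (y%:R - b%:R) by apply: ler_wpM2r; rewrite ?subr_ge0.
  by lra.
have : L2 * (y%:R - b%:R) <= l * (y%:R - b%:R).
  by apply: ler_wnM2r; rewrite ?subr_le0 ?(ltW lt_yb).
by lra.
Qed.

Hypothesis L12 : L1 != L2.

Lemma above_antisym x y a b : above x y a b -> above a b x y -> x = a /\ y = b.
Proof.
move=> [h1 h2] [h3 h4].
have [/eqP ex /eqP ey] : x%:R = a%:R :> R /\ y%:R = b%:R :> R.
  by apply: two_lines_meet L12 _ _; apply/le_anti; rewrite ?h1 ?h2 ?h3 ?h4.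
by move: ex ey; rewrite !eqr_nat => /eqP -> /eqP ->.
Qed.

Lemma above_split x1 y1 a1 b1 x2 y2 a2 b2 :
  above x1 y1 a1 b1 -> above x2 y2 a2 b2 ->
  (x1 + x2 = a1 + a2)%N -> (y1 + y2 = b1 + b2)%N -> x1 = a1 /\ y1 = b1.
Proof.
move=> [h1 h2] [h3 h4] ex ey; apply: above_antisym; first by split.
have := weightD L1 x1 y1 x2 y2; have := weightD L2 x1 y1 x2 y2.
have := weightD L1 a1 b1 a2 b2; have := weightD L2 a1 b1 a2 b2.
rewrite ex ey => f1 f2 f3 f4; split; lra.
Qed.

Lemma smul_supported f g a1 b1 a2 b2 :
  supported_above f a1 b1 -> supported_above g a2 b2 ->
  supported_above (smul f g) (a1 + a2) (b1 + b2).
Proof.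
move=> sf sg x y; rewrite /smul.
move=> /sum_ord_neq0 [i /sum_ord_neq0 [j /[!mulf_eq0] /norP [fij gij]]].
by have := above_add (sf _ _ fij) (sg _ _ gij); rewrite !subnKC // -ltnS.
Qed.

Lemma smul_corner f g a1 b1 a2 b2 :
  supported_above f a1 b1 -> supported_above g a2 b2 ->
  smul f g (a1 + a2) (b1 + b2) = f a1 b1 * g a2 b2.
Proof.
move=> sf sg.
have off_corner i j : (i <= a1 + a2)%N -> (j <= b1 + b2)%N -> (i != a1) || (j != b1) ->
    f i j * g (a1 + a2 - i)%N (b1 + b2 - j)%N = 0.
  move=> le_i le_j ne; apply/eqP; apply: contraTT ne.
  rewrite mulf_eq0 negb_or => /andP [fij gij].
  have [-> ->] := above_split (sf _ _ fij) (sg _ _ gij) (subnKC le_i) (subnKC le_j).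
  by rewrite !eqxx.
have lt_a1 : (a1 < (a1 + a2).+1)%N by rewrite ltnS leq_addr.
have lt_b1 : (b1 < (b1 + b2).+1)%N by rewrite ltnS leq_addr.
rewrite /smul (sum_ord_single (i0 := Ordinal lt_a1)) => [|i ne_i]; last first.
  rewrite big1 // => j _; apply: off_corner (ltn_ord i) (ltn_ord j) _.
  by rewrite -val_eqE in ne_i; rewrite ne_i.
rewrite (sum_ord_single (i0 := Ordinal lt_b1)) => [|j ne_j]; last first.
  apply: off_corner (leq_addr _ _) (ltn_ord j) _.
  by rewrite -val_eqE in ne_j; rewrite ne_j orbT.
by rewrite /= !addKn.
Qed.

Lemma monomial_supported a b : supported_above (monomial R a b) a b.
Proof.
move=> x y; rewrite /monomial.
have [/andP [/eqP -> /eqP ->] _|_] := boolP ((x == a) && (y == b)).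
  exact: above_refl.
by rewrite eqxx.
Qed.

Lemma spow_supported f a b n :
  supported_above f a b -> supported_above (spow f n) (n * a) (n * b).
Proof.
move=> sf; elim: n => [|n IH]; first exact: monomial_supported.
by rewrite !mulSn; apply: smul_supported.
Qed.

Lemma spow_corner f a b n :
  supported_above f a b -> spow f n (n * a)%N (n * b)%N = f a b ^+ n.
Proof.
move=> sf; elim: n => [|n IH]; first by rewrite /= /sone.
by rewrite !mulSn /= smul_corner ?IH ?exprS //; apply: spow_supported.
Qed.

Lemma term_supported P Q a1 b1 a2 b2 i j :
  supported_above P a1 b1 -> supported_above Q a2 b2 ->
  supported_above (smul (spow P i) (spow Q j)) (i * a1 + j * a2) (i * b1 + j * b2).
Proof. by move=> sP sQ; apply: smul_supported; apply: spow_supported. Qed.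

Lemma term_corner P Q a1 b1 a2 b2 i j :
  supported_above P a1 b1 -> supported_above Q a2 b2 ->
  smul (spow P i) (spow Q j) (i * a1 + j * a2)%N (i * b1 + j * b2)%N
  = P a1 b1 ^+ i * Q a2 b2 ^+ j.
Proof.
by move=> sP sQ; rewrite smul_corner ?spow_corner //; apply: spow_supported.
Qed.

Lemma scomp_supported g P Q a1 b1 a2 b2 c e :
  supported_above P a1 b1 -> supported_above Q a2 b2 ->
  (forall i j, g i j != 0 -> above (i * a1 + j * a2) (i * b1 + j * b2) c e) ->
  supported_above (scomp g P Q) c e.
Proof.
move=> sP sQ sg x y; rewrite /scomp.
move=> /sum_ord_neq0 [i /sum_ord_neq0 [j /[!mulf_eq0] /norP [gij tij]]].
exact: above_trans (term_supported sP sQ tij) (sg _ _ gij).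
Qed.

Lemma scomp_corner g P Q a1 b1 a2 b2 i0 j0 c e :
  (0 < a1)%N -> (0 < b2)%N ->
  (i0 * a1 + j0 * a2)%N = c -> (i0 * b1 + j0 * b2)%N = e ->
  supported_above P a1 b1 -> supported_above Q a2 b2 ->
  (forall i j, g i j != 0 -> above (i * a1 + j * a2) (i * b1 + j * b2) c e) ->
  (forall i j, g i j != 0 -> (i * a1 + j * a2)%N = c ->
                (i * b1 + j * b2)%N = e -> i = i0 /\ j = j0) ->
  scomp g P Q c e = g i0 j0 * (P a1 b1 ^+ i0 * Q a2 b2 ^+ j0).
Proof.
move=> a1_gt0 b2_gt0 ec ee sP sQ sg g_uniq.
have le_i0 : (i0 <= c + e)%N by rewrite -ec; have := leq_pmulr i0 a1_gt0; lia.
have le_j0 : (j0 <= c + e)%N by rewrite -ee; have := leq_pmulr j0 b2_gt0; lia.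
have off_corner i j : (i != i0) || (j != j0) ->
    g i j * smul (spow P i) (spow Q j) c e = 0.
  move=> ne; apply/eqP; apply: contraTT ne.
  rewrite mulf_eq0 negb_or => /andP [gij tij].
  have [ec' ee'] := above_antisym (term_supported sP sQ tij) (sg _ _ gij).
  by have [-> ->] := g_uniq _ _ gij (esym ec') (esym ee'); rewrite !eqxx.
rewrite /scomp (sum_ord_single (i0 := Ordinal (le_i0 : i0 < (c + e).+1)%N)) /=; last first.
  move=> i ne_i; rewrite big1 // => j _; apply: off_corner.
  by rewrite -val_eqE in ne_i; rewrite ne_i.
rewrite (sum_ord_single (i0 := Ordinal (le_j0 : j0 < (c + e).+1)%N)) /=; last first.
  by move=> j ne_j; apply: off_corner; rewrite -val_eqE in ne_j; rewrite ne_j orbT.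
by rewrite -ec -ee term_corner.
Qed.

End TwoWeights.
End Cones.

Section NewtonPolygon.
Variable R : realType.
Implicit Types (g : series R) (L W t : R) (u v : R * R).

Lemma wl_eq_of_min g (l : R) a b : g a b != 0 ->
  (forall i j, g i j != 0 -> weight l a b <= weight l i j) -> wl_eq g l (weight l a b).
Proof. by move=> gab g_min; split; [exists a, b | exact: g_min]. Qed.

Lemma convex_comb_ge n (lam F : 'I_n -> R) W :
  (forall k, 0 <= lam k) -> \sum_(k < n) lam k = 1 ->
  (forall k, lam k != 0 -> W <= F k) -> W <= \sum_(k < n) lam k * F k.
Proof.
move=> lam_ge0 lam1 FW; rewrite -[W]mul1r -lam1 mulr_suml; apply: ler_sum => k _.
have [->|lam_k] := eqVneq (lam k) 0; first by rewrite !mul0r.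
by rewrite ler_wpM2l // FW.
Qed.

Lemma convex_comb_eq n (lam F : 'I_n -> R) W :
  (forall k, 0 <= lam k) -> \sum_(k < n) lam k = 1 ->
  (forall k, lam k != 0 -> W <= F k) -> \sum_(k < n) lam k * F k = W ->
  forall k, lam k != 0 -> F k = W.
Proof.
move=> lam_ge0 lam1 FW eW.
have excess0 : \sum_(k < n) lam k * (F k - W) = 0.
  transitivity (\sum_(k < n) lam k * F k - W * \sum_(k < n) lam k).
    by rewrite mulr_sumr -sumrN -big_split; apply: eq_bigr => k _ /=; ring.
  by rewrite eW lam1 mulr1 subrr.
have excess_ge0 k : true -> 0 <= lam k * (F k - W).
  have [->|lam_k] := eqVneq (lam k) 0; first by rewrite mul0r.
  by rewrite mulr_ge0 ?subr_ge0 ?FW.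
move=> k lam_k; have /eqP := psumr_eq0P excess_ge0 excess0 (i := k) isT.
by rewrite mulf_eq0 (negbTE lam_k) subr_eq0 => /eqP.
Qed.

(* Both ends of an open segment lie on a supporting line through it. *)
Lemma segment_on_line t (X Y : R) :
  0 < t < 1 -> 0 <= X -> 0 <= Y -> t * X + (1 - t) * Y = 0 -> X = 0 /\ Y = 0.
Proof. by move=> /andP [t_gt0 t_lt1] X_ge0 Y_ge0 e; split; nra. Qed.

Lemma quadrant_weight L i j u :
  0 <= L -> i%:R <= u.1 -> j%:R <= u.2 -> weight L i j <= u.1 + L * u.2.
Proof. by move=> L_ge0 le_i le_j; rewrite lerD ?ler_wpM2l. Qed.

Lemma weight_convex_comb n (lam : 'I_n -> R) (pts : 'I_n -> R * R) L :
  \sum_(k < n) lam k * (pts k).1 + L * \sum_(k < n) lam k * (pts k).2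
  = \sum_(k < n) lam k * ((pts k).1 + L * (pts k).2).
Proof. by rewrite mulr_sumr -big_split; apply: eq_bigr => k _ /=; ring. Qed.

Lemma NP_weight_ge g L W u : 0 <= L ->
  (forall i j, g i j != 0 -> W <= weight L i j) ->
  newton_polygon g u -> W <= u.1 + L * u.2.
Proof.
move=> L_ge0 gW [n [pts [lam [in_q [lam_ge0 [lam1 ->]]]]]] /=.
rewrite weight_convex_comb; apply: convex_comb_ge => // k _.
have [i [j [gij [le_i le_j]]]] := in_q k.
exact: le_trans (gW _ _ gij) (quadrant_weight L_ge0 le_i le_j).
Qed.

Lemma NP_face_ordinate g L W M u : 0 <= L ->
  (forall i j, g i j != 0 -> W <= weight L i j) ->
  (forall i j, g i j != 0 -> weight L i j = W -> M <= j%:R) ->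
  newton_polygon g u -> u.1 + L * u.2 = W -> M <= u.2.
Proof.
move=> L_ge0 gW gM [n [pts [lam [in_q [lam_ge0 [lam1 ->]]]]]] /=.
have quadrant k : exists i j, [/\ g i j != 0, W <= weight L i j,
    weight L i j <= (pts k).1 + L * (pts k).2 & j%:R <= (pts k).2].
  have [i [j [gij [le_i le_j]]]] := in_q k.
  by exists i, j; split; rewrite ?gW ?quadrant_weight.
have pts_ge k : W <= (pts k).1 + L * (pts k).2.
  by have [i [j [_ Wij ij_le _]]] := quadrant k; apply: le_trans ij_le.
rewrite weight_convex_comb => on_face.
have pts_on_face := convex_comb_eq lam_ge0 lam1 (fun k _ => pts_ge k) on_face.
apply: convex_comb_ge => // k lam_k.
have [i [j [gij Wij ij_le le_j]]] := quadrant k.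
apply: le_trans (gM _ _ gij _) le_j.
by apply/le_anti; rewrite Wij -(pts_on_face k lam_k) ij_le.
Qed.

Lemma NP_face g L W u v t : 0 <= L ->
  (forall i j, g i j != 0 -> W <= weight L i j) ->
  newton_polygon g u -> newton_polygon g v -> 0 < t < 1 ->
  t * (u.1 + L * u.2) + (1 - t) * (v.1 + L * v.2) = W ->
  u.1 + L * u.2 = W /\ v.1 + L * v.2 = W.
Proof.
move=> L_ge0 gW gu gv t01 eW.
have [/eqP X0 /eqP Y0] : (u.1 + L * u.2) - W = 0 /\ (v.1 + L * v.2) - W = 0.
  apply: segment_on_line t01 _ _ _; rewrite ?subr_ge0 ?(NP_weight_ge L_ge0 gW) //.
  by rewrite -eW; ring.
by move: X0 Y0; rewrite !subr_eq0 => /eqP -> /eqP ->.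
Qed.

Lemma NP_point g i j : g i j != 0 -> newton_polygon g (i%:R, j%:R).
Proof.
move=> gij; exists 1%N, (fun _ => (i%:R, j%:R)), (fun _ => 1).
by do !split => //; rewrite ?big_ord1 ?mul1r //; exists i, j.
Qed.

Lemma NP_shift_up g u e : 0 <= e -> newton_polygon g u -> newton_polygon g (u.1, u.2 + e).
Proof.
move=> e_ge0 [n [pts [lam [in_q [lam_ge0 [lam1 ->]]]]]].
exists n, (fun k => ((pts k).1, (pts k).2 + e)), lam; do !split => //=.
  move=> k; have [i [j [gij [le_i le_j]]]] := in_q k.
  by exists i, j; do !split => //=; rewrite -[j%:R]addr0 lerD.
congr (_, _); rewrite -[e in X in X = _]mulr1 -lam1 mulr_sumr -big_split /=.
by apply: eq_bigr => k _; ring.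
Qed.

Lemma vertex_of_two_weights g L1 L2 a b : L1 != L2 -> 0 <= L1 -> 0 <= L2 ->
  supported_above L1 L2 g a b -> g a b != 0 -> is_vertex g (a%:R, b%:R).
Proof.
move=> L12 L1_ge0 L2_ge0 g_above gab; split; first exact: NP_point.
move=> u v t gu gv t01 [e1 e2].
have on_line L : 0 <= L -> (forall i j, g i j != 0 -> weight L a b <= weight L i j) ->
    u.1 + L * u.2 = weight L a b /\ v.1 + L * v.2 = weight L a b.
  move=> L_ge0 gW; apply: NP_face L_ge0 gW gu gv t01 _.
  by rewrite /weight e1 e2; ring.
have [u1 v1] := on_line L1 L1_ge0 (fun i j gij => (g_above i j gij).1).
have [u2 v2] := on_line L2 L2_ge0 (fun i j gij => (g_above i j gij).2).
have corner w : w.1 + L1 * w.2 = weight L1 a b -> w.1 + L2 * w.2 = weight L2 a b ->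
    w = (a%:R, b%:R).
  by case: w => w1 w2 /= h1 h2; have [-> ->] := two_lines_meet L12 h1 h2.
by split; apply: corner.
Qed.

Lemma vertex_of_lex_min g L a b : 0 <= L -> g a b != 0 ->
  (forall i j, g i j != 0 -> weight L a b <= weight L i j) ->
  (forall i j, g i j != 0 -> weight L i j = weight L a b -> (b <= j)%N) ->
  is_vertex g (a%:R, b%:R).
Proof.
move=> L_ge0 gab g_min g_lex; split; first exact: NP_point.
move=> u v t gu gv t01 [e1 e2].
have split_ab : t * (u.1 + L * u.2) + (1 - t) * (v.1 + L * v.2) = weight L a b.
  by rewrite /weight e1 e2; ring.
have [u_face v_face] := NP_face L_ge0 g_min gu gv t01 split_ab.
have gM i j : g i j != 0 -> weight L i j = weight L a b -> b%:R <= j%:R :> R.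
  by move=> gij eij; rewrite ler_nat (g_lex _ _ gij eij).
have u2 := NP_face_ordinate L_ge0 g_min gM gu u_face.
have v2 := NP_face_ordinate L_ge0 g_min gM gv v_face.
have [/eqP u2b /eqP v2b] : u.2 - b%:R = 0 /\ v.2 - b%:R = 0.
  by apply: segment_on_line t01 _ _ _; rewrite ?subr_ge0 // e2; ring.
move: u2b v2b u_face v_face; rewrite !subr_eq0 /weight => /eqP u2b /eqP v2b.
rewrite u2b v2b => /addIr u1a /addIr v1a.
by rewrite [u]surjective_pairing [v]surjective_pairing u1a v1a u2b v2b.
Qed.

(* Strict convexity: a vertex of N(g) lies strictly below the chord joining
   two points of N(g) on either side of it. *)
Lemma vertex_below_chord g (x0 y0 x1 y1 x2 y2 : R) :
  newton_polygon g (x0, y0) -> is_vertex g (x1, y1) -> newton_polygon g (x2, y2) ->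
  x0 < x1 -> x1 < x2 ->
  (x1 - x0) * (y1 - y2) < (x2 - x1) * (y0 - y1).
Proof.
move=> g0 [_ g1_extreme] g2 lt01 lt12; rewrite ltNge; apply/negP => above_chord.
have x20_gt0 : 0 < x2 - x0 by rewrite subr_gt0 (lt_trans lt01).
pose t := (x2 - x1) / (x2 - x0).
pose e := ((x1 - x0) * (y1 - y2) - (x2 - x1) * (y0 - y1)) / (x2 - x0).
have e_ge0 : 0 <= e by apply: divr_ge0; [rewrite subr_ge0 | exact: ltW].
have t01 : 0 < t < 1.
  apply/andP; split; rewrite /t; first by rewrite divr_gt0 // subr_gt0.
  by rewrite ltr_pdivrMr // mul1r ltrD2l ltrN2.
have split_x1 : (x1, y1) = (t * (x0, y0 + e).1 + (1 - t) * (x2, y2 + e).1,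
                           t * (x0, y0 + e).2 + (1 - t) * (x2, y2 + e).2).
  by congr (_, _); rewrite /t /e /=; field; rewrite gt_eqF.
have [[x01 _] _] := g1_extreme _ _ t (NP_shift_up e_ge0 g0) (NP_shift_up e_ge0 g2)
  t01 split_x1.
by move: lt01; rewrite x01 ltxx.
Qed.

Lemma weight_box L W : 0 < L -> 0 <= W ->
  exists N, forall i j, weight L i j <= W -> (i < N)%N && (j < N)%N.
Proof.
move=> L_gt0 W_ge0.
pose N := (Num.bound W + Num.bound (W / L))%N; exists N => i j.
have W_lt_N : W < N%:R.
  apply: lt_le_trans (archi_boundP W_ge0) _; rewrite ler_nat; exact: leq_addr.
have WL_lt_N : W < L * N%:R.
  rewrite mulrC -ltr_pdivrMr //.
  apply: lt_le_trans (archi_boundP (divr_ge0 W_ge0 (ltW L_gt0))) _.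
  rewrite ler_nat; exact: leq_addl.
apply: contraTT; rewrite negb_and -!leqNgt -ltNge /weight => /orP [le_Ni|le_Nj].
  apply: lt_le_trans W_lt_N _; rewrite -[N%:R]addr0 lerD ?ler_nat //.
  exact: mulr_ge0 (ltW L_gt0) (ler0n _ _).
apply: lt_le_trans WL_lt_N _; rewrite -[L * _]add0r lerD //.
by rewrite ler_wpM2l ?ler_nat // ltW.
Qed.

Lemma lex_minimizer g L : 0 < L -> (exists i j, g i j != 0) ->
  exists a b, [/\ g a b != 0,
    forall i j, g i j != 0 -> weight L a b <= weight L i j &
    forall i j, g i j != 0 -> weight L i j = weight L a b -> (b <= j)%N].
Proof.
move=> L_gt0 [a0 [b0 gab0]].
have [N box] := weight_box (W := weight L a0 b0) L_gt0 (weight_ge0 _ _ (ltW L_gt0)).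
have /andP [a0N b0N] := box a0 b0 (lexx _).
pose wt (t : 'I_N * 'I_N) := weight L t.1 t.2.
pose supp (t : 'I_N * 'I_N) := g t.1 t.2 != 0.
pose t0 := (Ordinal a0N, Ordinal b0N).
have [t1 supp_t1 t1_min] := arg_minP wt (i0 := t0) (P := supp) gab0.
have g_min i j : g i j != 0 -> wt t1 <= weight L i j.
  move=> gij; have [/box /andP [iN jN]|far] := boolP (weight L i j <= weight L a0 b0).
    exact: (t1_min (Ordinal iN, Ordinal jN)).
  by rewrite ltW // (le_lt_trans (t1_min t0 gab0)) // ltNge.
have [t2 /andP [supp_t2 /eqP wt_t2] t2_min] :=
  arg_minnP (fun p : 'I_N * 'I_N => nat_of_ord p.2) (P := fun p => supp p && (wt p == wt t1))
    (ltac:(by rewrite /= supp_t1 eqxx) : supp t1 && (wt t1 == wt t1)).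
exists t2.1, t2.2; split => //; first by move=> i j /g_min; rewrite -/(wt t2) wt_t2.
move=> i j gij eij.
have /box /andP [iN jN] : weight L i j <= weight L a0 b0.
  by rewrite eij -/(wt t2) wt_t2 (t1_min t0 gab0).
by apply: (t2_min (Ordinal iN, Ordinal jN)); rewrite /= /supp gij -wt_t2 /wt /= eij eqxx.
Qed.

End NewtonPolygon.

Section VerticesOfQ.
Variable R : realType.
Variables (q : series R) (nv mv : nat -> nat) (s : nat).
Implicit Types (L : R).

Hypothesis chain_ordered :
  forall j, (1 <= j < s)%N -> (nv j < nv j.+1)%N /\ (mv j.+1 < mv j)%N.
Hypothesis chain_vertices :
  forall j, (1 <= j <= s)%N -> is_vertex q ((nv j)%:R, (mv j)%:R).
Hypothesis only_vertices : forall v, is_vertex q v ->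
  exists2 j, (1 <= j <= s)%N & v = ((nv j)%:R, (mv j)%:R).
Hypothesis q_neq0 : exists i j, q i j != 0.

(* The weight L for which the edge from the j-th to the (j+1)-th vertex is
   a level set of the L-weight. *)
Definition slope j : R := ((nv j.+1 - nv j)%N)%:R / ((mv j - mv j.+1)%N)%:R.

Lemma slope_gt0 j : (1 <= j < s)%N -> 0 < slope j.
Proof. by move=> /chain_ordered [lt_n lt_m]; rewrite divr_gt0 ?ltr0n ?subn_gt0. Qed.

(* Strict convexity of N(q) at the vertex j+1. *)
Lemma slope_lt j : (1 <= j)%N -> (j.+2 <= s)%N -> slope j < slope j.+1.
Proof.
move=> j_ge1 j_le.
have [x01 y10] := chain_ordered (j := j) (ltac:(lia)).
have [x12 y21] := chain_ordered (j := j.+1) (ltac:(lia)).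
rewrite /slope ltr_pdivrMr ?ltr0n ?subn_gt0 // mulrAC ltr_pdivlMr ?ltr0n ?subn_gt0 //.
rewrite !natrB ?(ltnW x01, ltnW y10, ltnW x12, ltnW y21) //.
apply: vertex_below_chord; rewrite ?ltr_nat //.
- exact: (chain_vertices (j := j) (ltac:(lia))).1.
- exact: (chain_vertices (j := j.+1) (ltac:(lia))).
- exact: (chain_vertices (j := j.+2) (ltac:(lia))).1.
Qed.

Lemma slope_le i j : (1 <= i <= j)%N -> (j < s)%N -> slope i <= slope j.
Proof.
move=> /andP [i_ge1 le_ij] lt_js.
have [->|ne_ij] := eqVneq i j; first by [].
apply: (chain_rel (r := fun x y => x <= y)) => [x y z|l ?|].
- exact: le_trans.
- by apply/ltW/slope_lt; lia.
- by rewrite ltn_neqAle ne_ij.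
Qed.

Lemma weight_step L j : (1 <= j < s)%N ->
  weight L (nv j.+1) (mv j.+1) - weight L (nv j) (mv j)
  = ((mv j - mv j.+1)%N)%:R * (slope j - L).
Proof.
move=> /chain_ordered [lt_n lt_m].
have mv_neq0 : ((mv j - mv j.+1)%N)%:R != 0 :> R by rewrite pnatr_eq0 -lt0n subn_gt0.
by rewrite /slope mulrBr mulrC divfK // !natrB ?(ltnW lt_n, ltnW lt_m) // /weight; ring.
Qed.

Section WeightAlongChain.
Variables (k : nat) (L : R).
Hypotheses (k_ge2 : (2 <= k)%N) (k_lt_s : (k < s)%N).
Hypotheses (L_ge : slope k.-1 <= L) (L_le : L <= slope k).
Local Notation wv j := (weight L (nv j) (mv j)).

Lemma weight_rises j : (k <= j < s)%N ->
  wv j <= wv j.+1 /\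
  (L < slope k -> wv j < wv j.+1).
Proof.
move=> /andP [le_kj lt_js].
have step := weight_step L (j := j) (ltac:(lia)).
have [_ lt_m] := chain_ordered (j := j) (ltac:(lia)).
have le_slope : slope k <= slope j by apply: slope_le; lia.
split; [rewrite -subr_ge0 | move=> lt_L; rewrite -subr_gt0]; rewrite step.
  by rewrite mulr_ge0 // subr_ge0 (le_trans L_le).
by rewrite mulr_gt0 ?ltr0n ?subn_gt0 // subr_gt0 (lt_le_trans lt_L).
Qed.

Lemma weight_falls j : (1 <= j < k)%N ->
  wv j.+1 <= wv j /\
  (slope k.-1 < L -> wv j.+1 < wv j).
Proof.
move=> /andP [j_ge1 lt_jk].
have step := weight_step L (j := j) (ltac:(lia)).
have [_ lt_m] := chain_ordered (j := j) (ltac:(lia)).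
have le_slope : slope j <= slope k.-1 by apply: slope_le; lia.
split; [rewrite -subr_le0 | move=> lt_L; rewrite -subr_lt0]; rewrite step.
  by rewrite mulr_ge0_le0 // subr_le0 (le_trans le_slope).
by rewrite pmulr_rlt0 ?ltr0n ?subn_gt0 // subr_lt0 (le_lt_trans le_slope).
Qed.

Lemma vertex_weight_min j : (1 <= j <= s)%N ->
  wv k <= wv j.
Proof.
move=> /andP [j_ge1 j_le_s]; case: (ltngtP j k) => [lt_jk|lt_kj|-> //].
  apply: (chain_rel (r := fun x y => y <= x) (f := fun i => wv i)) lt_jk => [x y z yx zy|i ?].
    exact: le_trans zy yx.
  by apply: (weight_falls _).1; lia.
apply: (chain_rel (r := fun x y => x <= y) (f := fun i => wv i)) lt_kj => [x y z|i ?].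
  exact: le_trans.
by apply: (weight_rises _).1; lia.
Qed.

Lemma vertex_weight_strict j : slope k.-1 < L -> L < slope k ->
  (1 <= j <= s)%N -> j != k -> wv k < wv j.
Proof.
move=> lt_L L_lt /andP [j_ge1 j_le_s]; case: (ltngtP j k) => [lt_jk|lt_kj|//] _.
  apply: (chain_rel (r := fun x y => y < x) (f := fun i => wv i)) lt_jk => [x y z yx zy|i ?].
    exact: lt_trans zy yx.
  by apply: (weight_falls _).2; first lia.
apply: (chain_rel (r := fun x y => x < y) (f := fun i => wv i)) lt_kj => [x y z|i ?].
  exact: lt_trans.
by apply: (weight_rises _).2; first lia.
Qed.

End WeightAlongChain.

Lemma weight_min_at_vertex L : 0 < L -> exists2 j, (1 <= j <= s)%N &
  q (nv j) (mv j) != 0 /\ forall i j', q i j' != 0 -> weight L (nv j) (mv j) <= weight L i j'.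
Proof.
move=> L_gt0; have [a [b [qab ab_min ab_lex]]] := lex_minimizer L_gt0 q_neq0.
have ab_vertex := vertex_of_lex_min (ltW L_gt0) qab ab_min ab_lex.
have [j j_range [/eqP ea /eqP eb]] := only_vertices ab_vertex.
by move: ea eb; rewrite !eqr_nat => /eqP ea /eqP eb; exists j; rewrite // -ea -eb.
Qed.

Lemma q_weight_min k : (2 <= k)%N -> (k < s)%N ->
  forall L, slope k.-1 <= L <= slope k ->
  forall i j, q i j != 0 -> weight L (nv k) (mv k) <= weight L i j.
Proof.
move=> k_ge2 k_lt_s L /andP [L_ge L_le] i j qij.
have L_gt0 : 0 < L by apply: lt_le_trans L_ge; apply: slope_gt0; lia.
have [j' j'_range [_ j'_min]] := weight_min_at_vertex L_gt0.
exact: le_trans (vertex_weight_min k_ge2 k_lt_s L_ge L_le j'_range) (j'_min _ _ qij).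
Qed.

Lemma q_vertex_neq0 k : (2 <= k)%N -> (k < s)%N -> q (nv k) (mv k) != 0.
Proof.
move=> k_ge2 k_lt_s.
have lt_slopes : slope k.-1 < slope k by have := slope_lt (j := k.-1); rewrite prednK; lia.
pose L := (slope k.-1 + slope k) / 2.
have L_ge : slope k.-1 < L by rewrite /L; lra.
have L_le : L < slope k by rewrite /L; lra.
have L_gt0 : 0 < L by apply: lt_trans L_ge; apply: slope_gt0; lia.
have [j j_range [qj j_min]] := weight_min_at_vertex L_gt0.
have [<- //|ne_jk] := eqVneq j k.
have := NP_weight_ge (ltW L_gt0) j_min (chain_vertices (j := k) (ltac:(lia))).1.
by rewrite leNgt /= (vertex_weight_strict k_ge2 k_lt_s (ltW L_ge) (ltW L_le)).
Qed.

Lemma y_intercept_slope j : (1 <= j < s)%N ->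
  let T := y_intercept (nv j)%:R (mv j)%:R (nv j.+1)%:R (mv j.+1)%:R in
  T = (mv j)%:R + (nv j)%:R / slope j /\ T = (mv j.+1)%:R + (nv j.+1)%:R / slope j.
Proof.
move=> /chain_ordered [lt_n lt_m] T; rewrite /T.
have dn : (nv j.+1)%:R - (nv j)%:R != 0 :> R by rewrite subr_eq0 eqr_nat gtn_eqF.
have dm : (mv j)%:R - (mv j.+1)%:R != 0 :> R by rewrite subr_eq0 eqr_nat gtn_eqF.
rewrite /y_intercept /slope !natrB ?(ltnW lt_n, ltnW lt_m) //.
by split; field; rewrite dn dm.
Qed.

Lemma case4_corner_bounds k (delta : R) : (2 <= k)%N -> (k < s)%N ->
  y_intercept (nv k)%:R (mv k)%:R (nv k.+1)%:R (mv k.+1)%:R <= delta <=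
  y_intercept (nv k.-1)%:R (mv k.-1)%:R (nv k)%:R (mv k)%:R ->
  (delta - (mv k)%:R) * slope k.-1 <= (nv k)%:R <= (delta - (mv k)%:R) * slope k.
Proof.
move=> k_ge2 k_lt_s /andP [T_right T_left].
have [T_k _] := y_intercept_slope (j := k) (ltac:(lia)).
have [_ T_km1] := y_intercept_slope (j := k.-1) (ltac:(lia)).
rewrite prednK ?(leq_trans _ k_ge2) // in T_km1.
have sk_gt0 : 0 < slope k by apply: slope_gt0; lia.
have skm1_gt0 : 0 < slope k.-1 by apply: slope_gt0; lia.
rewrite T_k -lerBrDl ler_pdivrMr // in T_right.
by rewrite T_km1 -lerBlDl ler_pdivlMr // in T_left; rewrite T_left T_right.
Qed.

End VerticesOfQ.

Definition gamma_iter (delta gamma d n : nat) : nat :=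
  (gamma * \sum_(i < n) delta ^ (n.-1 - i) * d ^ i)%N.

Lemma gamma_iter0 delta gamma d : gamma_iter delta gamma d 0 = 0%N.
Proof. by rewrite /gamma_iter big_ord0 muln0. Qed.

Lemma gamma_iterS delta gamma d n :
  gamma_iter delta gamma d n.+1 = (gamma * delta ^ n + d * gamma_iter delta gamma d n)%N.
Proof.
rewrite /gamma_iter big_ord_recl /= subn0 expn0 muln1 mulnDr; congr (_ + _)%N.
rewrite !big_distrr /=; apply: eq_bigr => i _; rewrite /bump leq0n add1n.
have -> : (n - i.+1 = n.-1 - i)%N by lia.
by rewrite expnS; ring.
Qed.

Section Iteration.
Variable R : realType.
Variables (p : nat -> R[i]) (q : series R) (delta gamma d : nat) (L1 L2 : R).
Implicit Types (L : R) (P Q : series R).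

Hypotheses (delta_ge1 : (1 <= delta)%N) (d_ge1 : (1 <= d)%N).
Hypotheses (p_low : forall i, (i < delta)%N -> p i = 0) (p_delta : p delta != 0).
Hypothesis L12 : L1 < L2.
Hypothesis q_corner : q gamma d != 0.
Hypothesis q_min : forall L, L1 <= L <= L2 ->
  forall i j, q i j != 0 -> weight L gamma d <= weight L i j.
Hypothesis gamma_bounds :
  (delta%:R - d%:R) * L1 <= gamma%:R <= (delta%:R - d%:R) * L2.

Local Notation gamma_ := (gamma_iter delta gamma d).

Lemma L1_neq_L2 : L1 != L2.
Proof. by rewrite lt_eqF. Qed.

Lemma delta_pow_gt0 n : (0 < delta ^ n)%N.
Proof. by rewrite expn_gt0 delta_ge1. Qed.

(* The weight L pulled back by f^n: the L-weight of the corner of the term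
   z^(i delta^n + j gamma_n) w^(j d^n) of q(P^n, Q^n) is delta^n times the
   pulled-back weight of (i, j). *)
Definition pullback n L : R := ((gamma_ n)%:R + L * (d ^ n)%:R) / (delta ^ n)%:R.

Lemma weight_pullback n L i j :
  weight L (i * delta ^ n + j * gamma_ n) (j * d ^ n)
  = (delta ^ n)%:R * weight (pullback n L) i j.
Proof. exact: weight_scale (delta_pow_gt0 n). Qed.

Lemma pullback_range n L : L1 <= L <= L2 -> L1 <= pullback n L <= L2.
Proof.
move=> L_range; rewrite /pullback ler_pdivlMr ?ler_pdivrMr ?ltr0n ?delta_pow_gt0 //.
elim: n => [|n /andP [lo hi]]; first by rewrite gamma_iter0 !expn0 add0r !mulr1.
have [g_lo g_hi] := andP gamma_bounds.
have d_ge0 : 0 <= d%:R :> R := ler0n _ _.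
have Dn_ge0 : 0 <= (delta ^ n)%:R :> R := ler0n _ _.
have := ler_wpM2r Dn_ge0 g_lo; have := ler_wpM2r Dn_ge0 g_hi.
have := ler_wpM2l d_ge0 lo; have := ler_wpM2l d_ge0 hi.
rewrite gamma_iterS !expnS !natrD !natrM; lra.
Qed.

Lemma first_coordinate_step n P Q :
  supported_above L1 L2 P (delta ^ n)%N 0 -> P (delta ^ n)%N 0 != 0 ->
  supported_above L1 L2 Q (gamma_ n) (d ^ n)%N ->
  supported_above L1 L2 (scomp (lift1 p) P Q) (delta ^ n.+1)%N 0 /\
  scomp (lift1 p) P Q (delta ^ n.+1)%N 0 != 0.
Proof.
move=> sP cP sQ.
have lift1_supp i j : lift1 p i j != 0 -> j = 0%N /\ (delta <= i)%N.
  rewrite /lift1; case: (j =P 0%N) => [-> pi|_]; last by rewrite eqxx.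
  split => //; case: (ltnP i delta) => // /p_low pi0.
  by rewrite pi0 eqxx in pi.
have g_above i j : lift1 p i j != 0 -> above L1 L2 (i * delta ^ n + j * gamma_ n)
    (i * 0 + j * d ^ n) (delta ^ n.+1)%N 0.
  move=> /lift1_supp [-> le_delta_i]; rewrite !mul0n !muln0 !addn0.
  by apply: above_horizontal; rewrite expnS leq_mul2r le_delta_i orbT.
split; first exact: scomp_supported sP sQ g_above.
rewrite (scomp_corner L1_neq_L2 (i0 := delta) (j0 := 0) (delta_pow_gt0 n) _ _ _ sP sQ g_above).
- by rewrite /lift1 eqxx expr0 mulr1 mulf_neq0 ?expf_neq0.
- by rewrite expn_gt0 d_ge1.
- by rewrite expnS mul0n addn0.
- by rewrite !mul0n muln0.
move=> i j /lift1_supp [-> _]; rewrite mul0n addn0 expnS => /eqP.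
by rewrite eqn_pmul2r ?delta_pow_gt0 // => /eqP.
Qed.

Lemma second_coordinate_step n P Q :
  supported_above L1 L2 P (delta ^ n)%N 0 -> P (delta ^ n)%N 0 != 0 ->
  supported_above L1 L2 Q (gamma_ n) (d ^ n)%N -> Q (gamma_ n) (d ^ n)%N != 0 ->
  supported_above L1 L2 (scomp q P Q) (gamma_ n.+1) (d ^ n.+1)%N /\
  scomp q P Q (gamma_ n.+1) (d ^ n.+1)%N != 0.
Proof.
move=> sP cP sQ cQ.
have d_n_gt0 : (0 < d ^ n)%N by rewrite expn_gt0 d_ge1.
have target L :
    weight L (gamma_ n.+1) (d ^ n.+1)%N = (delta ^ n)%:R * weight (pullback n L) gamma d.
  by rewrite gamma_iterS expnS weight_pullback.
have q_above i j : q i j != 0 -> above L1 L2 (i * delta ^ n + j * gamma_ n)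
    (i * 0 + j * d ^ n) (gamma_ n.+1) (d ^ n.+1)%N.
  move=> qij; rewrite muln0 add0n /above !target !weight_pullback.
  by split; rewrite ler_wpM2l ?ler0n // q_min // pullback_range // ?lexx ltW.
split; first exact: scomp_supported sP sQ q_above.
rewrite (scomp_corner L1_neq_L2 (i0 := gamma) (j0 := d) (delta_pow_gt0 n) d_n_gt0 _ _
  sP sQ q_above).
- by rewrite !mulf_neq0 ?expf_neq0.
- by rewrite gamma_iterS.
- by rewrite muln0 expnS.
move=> i j _ ei; rewrite muln0 add0n expnS => /eqP; rewrite eqn_pmul2r // => /eqP ej.
move: ei; rewrite ej gamma_iterS => /addIn /eqP.
by rewrite eqn_pmul2r ?delta_pow_gt0 // => /eqP.
Qed.

Lemma iterate_corners n :
  let PQ := skew_iter p q n in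
  [/\ supported_above L1 L2 PQ.1 (delta ^ n)%N 0, PQ.1 (delta ^ n)%N 0 != 0,
      supported_above L1 L2 PQ.2 (gamma_ n) (d ^ n)%N & PQ.2 (gamma_ n) (d ^ n)%N != 0].
Proof.
elim: n => [|n [sP cP sQ cQ]] /=.
  rewrite gamma_iter0 expn0; split; rewrite ?oner_neq0 //.
  - exact: (@monomial_supported R L1 L2 1 0).
  - exact: (@monomial_supported R L1 L2 0 1).
have [sP' cP'] := first_coordinate_step sP cP sQ.
by have [sQ' cQ'] := second_coordinate_step sP cP sQ cQ.
Qed.

End Iteration.

Unset Implicit Arguments.
Set Strict Implicit.

Theorem theorem6p1 (R : realType) (p : nat -> R[i]) (q : series R)
    (delta : nat) (s : nat) (nv mv : nat -> nat) (k : nat) :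
  (* p(z) = a_delta z^delta + O(z^(delta+1)), a_delta <> 0, delta >= 1, p holomorphic *)
  (1 <= delta)%N ->
  (forall i, (i < delta)%N -> p i = 0) ->
  p delta != 0 ->
  convergent1 p ->
  (* q holomorphic, q(0,0) = 0, q not identically zero *)
  convergent q ->
  q 0%N 0%N = 0 ->
  (exists i j, q i j != 0) ->
  (* (nv 1, mv 1), ..., (nv s, mv s) are the vertices of N(q) *)
  (forall j, (1 <= j < s)%N -> (nv j < nv j.+1)%N /\ (mv j.+1 < mv j)%N) ->
  (forall j, (1 <= j <= s)%N -> is_vertex q ((nv j)%:R, (mv j)%:R)) ->
  (forall v, is_vertex q v ->
     exists2 j, (1 <= j <= s)%N & v = ((nv j)%:R, (mv j)%:R)) ->
  (* Case 4 *)
  (2 < s)%N ->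
  (2 <= k <= s.-1)%N ->
  @y_intercept R (nv k)%:R (mv k)%:R (nv k.+1)%:R (mv k.+1)%:R <= delta%:R
    <= @y_intercept R (nv k.-1)%:R (mv k.-1)%:R (nv k)%:R (mv k)%:R ->
  let gamma := nv k in
  let d := mv k in
  let l1 : R := ((nv k - nv k.-1)%N)%:R / ((mv k.-1 - mv k)%N)%:R in
  let l1l2 : R := ((nv k.+1 - nv k)%N)%:R / ((mv k - mv k.+1)%N)%:R in
  forall n : nat, (1 <= n)%N ->
    let Qn := (skew_iter p q n).2 in
    let gamma_n := (gamma * \sum_(i < n) delta ^ (n.-1 - i) * d ^ i)%N in
    contains Qn gamma_n (d ^ n) /\
    is_vertex Qn (gamma_n%:R, (d ^ n)%:R) /\
    (forall l : R, l1 <= l <= l1l2 ->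
       wl_eq Qn l (gamma_n%:R + l * (d ^ n)%:R) /\
       wl_eq (monomial R gamma_n (d ^ n)) l (gamma_n%:R + l * (d ^ n)%:R)).
Proof.
move=> delta_ge1 p_low p_delta _ _ _ q_neq0 ordered vertices only_vertices _
  /andP [k_ge2 k_le] intercepts gamma d l1 l1l2 n _ Qn gamma_n.
have k_lt_s : (k < s)%N by lia.
have -> : l1 = slope R nv mv k.-1 by rewrite /l1 /slope prednK // ltnW.
have l1_gt0 : 0 < slope R nv mv k.-1 by apply: (slope_gt0 _ ordered); lia.
have l1_lt : slope R nv mv k.-1 < l1l2.
  have lt_slopes := slope_lt ordered vertices (j := k.-1) (ltac:(lia)) (ltac:(lia)).
  by rewrite prednK ?(ltnW k_ge2) in lt_slopes.
have d_ge1 : (1 <= d)%N by have := ordered k; rewrite /d; lia.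
have [_ _ sQ cQ] := iterate_corners delta_ge1 d_ge1 p_low p_delta l1_lt
  (q_vertex_neq0 ordered vertices only_vertices q_neq0 k_ge2 k_lt_s)
  (q_weight_min ordered vertices only_vertices q_neq0 k_ge2 k_lt_s)
  (case4_corner_bounds ordered k_ge2 k_lt_s intercepts) n.
split; first exact: cQ.
split; first exact: vertex_of_two_weights (negbT (lt_eqF l1_lt)) (ltW l1_gt0)
  (ltW (lt_trans l1_gt0 l1_lt)) sQ cQ.
move=> l l_range; split; apply: wl_eq_of_min.
- exact: cQ.
- by move=> i j /sQ; apply: weight_between l_range.
- by rewrite /monomial !eqxx oner_neq0.
- by move=> i j /(monomial_supported l l) [].
Qed.
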